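(* Let $0<q<1$ and $\Sigma\sim\mathrm{Mallows}(\mathbb{Z},q)$. Then for every $j\in\mathbb{Z}$, $$q\,\mathbb{P}(\Sigma(0)=j)\le\mathbb{P}(\Sigma(0)=j+1)\le\frac1q\,\mathbb{P}(\Sigma(0)=j).$$
   Context: For a finite set $A\subseteq\mathbb{Z}$ and a bijection $\pi:A\to A$, $\mathrm{inv}(\pi)$ is the number of pairs $i<j$ in $A$ with $\pi(i)>\pi(j)$, and $\Pi_A\sim\mathrm{Mallows}(A,q)$ means $\mathbb{P}(\Pi_A=\pi)\propto q^{\mathrm{inv}(\pi)}$ over bijections $\pi$ of $A$. For a bijection $\sigma$ of a set $B\subseteq\mathbb{Z}$ and finite $A\subseteq B$, the pattern $\sigma_A:A\to A$ is defined by $\sigma_A(a)=a_{(i)}$ when $\sigma(a)$ is the $i$-th smallest element of $\sigma[A]$, where $a_{(i)}$ is the $i$-th smallest element of $A$. For $0<q<1$, $\mathrm{Mallows}(\mathbb{Z},q)$ is Gnedin and Olshanski's bi-infinite Mallows measure: the law of a random bijection $\Sigma$ of $\mathbb{Z}$ such that $\Sigma_I\sim\mathrm{Mallows}(I,q)$ for every finite interval of integers $I$, and, with $I_n=\{-n,\dots,n\}$, almost surely for every $i\in\mathbb{Z}$ one has $\Sigma_{I_n}(i)=\Sigma(i)$ for all sufficiently large $n$. *)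

From HB Require Import structures.
From mathcomp Require Import all_boot all_order all_algebra.
From mathcomp Require Import all_classical all_reals all_analysis.
Set Implicit Arguments. Unset Strict Implicit. Unset Printing Implicit Defensive.
Import Order.TTheory GRing.Theory Num.Theory.
Local Open Scope ring_scope.
Local Open Scope classical_set_scope.

Definition in_interval (a : int) (n : nat) (x : int) : Prop :=
  a <= x /\ x < a + n%:Z.

(* Pattern sigma_I of a bijection sigma on the interval I = I(a,n):
   sigma_I(x) = a_(i) where sigma(x) is the i-th smallest element of sigma[I];
   since a_(i) = a + (i-1) and i - 1 = #{y in I | sigma y < sigma x},
   sigma_I(x) = a + #{y in I | sigma y < sigma x}.  (Meaningful for x in I.) *)
Definition pattern (sigma : int -> int) (a : int) (n : nat) (x : int) : int :=
  a + (#|[set k : 'I_n | sigma (a + (k : nat)%:Z) < sigma x]|)%:Z.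

Definition inv_on (pi : int -> int) (a : int) (n : nat) : nat :=
  #|[set kl : 'I_n * 'I_n |
       ((kl.1 : nat) < (kl.2 : nat))%N &&
       (pi (a + (kl.2 : nat)%:Z) < pi (a + (kl.1 : nat)%:Z))]|.

Definition bij_on_interval (pi : int -> int) (a : int) (n : nat) : Prop :=
  (forall x, in_interval a n x -> in_interval a n (pi x)) /\
  (forall x y, in_interval a n x -> in_interval a n y -> pi x = pi y -> x = y).

(* Sigma : T -> (int -> int) has law Mallows(Z, q) on the probability space
   (T, P), following Gnedin--Olshanski as in the paper:
   - Sigma(w) is a bijection of Z for every w;
   - each coordinate Sigma(.)(i) is a (discrete) random variable;
   - for every finite interval I, the pattern Sigma_I is Mallows(I, q):
     P(Sigma_I = pi) is proportional to q^inv(pi) over bijections pi of I;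
   - almost surely, for every i, Sigma_{I_n}(i) = Sigma(i) for all large n,
     where I_n = {-n, ..., n} = I(-n, 2n+1). *)
Definition is_mallows_Z {d : measure_display} {T : measurableType d}
  {R : realType} (P : probability T R) (q : R) (Sigma : T -> int -> int) : Prop :=
  [/\ forall w, bijective (Sigma w),
      forall i j : int, measurable [set w : T | Sigma w i = j],
      forall (a : int) (n : nat), exists c : R,
        forall pi : int -> int, bij_on_interval pi a n ->
          P [set w : T | forall x, in_interval a n x -> pattern (Sigma w) a n x = pi x]
          = (c * q ^+ inv_on pi a n)%:E
    & {ae P, forall w, forall i : int, exists N : nat, forall m : nat, (N <= m)%N ->
          pattern (Sigma w) (- (m%:Z)) (2 * m).+1 i = Sigma w i}].

From HB Require Import structures.
From mathcomp Require Import all_boot all_order all_algebra.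
From mathcomp Require Import all_classical all_reals all_analysis.
From mathcomp Require Import fingroup perm zify.
Import Order.TTheory GRing.Theory Num.Theory numFieldNormedType.Exports.
Set Implicit Arguments. Unset Strict Implicit. Unset Printing Implicit Defensive.

(* Let I be a finite interval containing 0.  The pattern of Sigma on I is
   Mallows(I, q), so P(Sigma_I(0) = j) is proportional to the sum of q^inv(s)
   over the permutations s of I with s(0) = j.  Composing with the adjacent
   transposition (j j+1) maps these bijectively onto the permutations with
   s(0) = j + 1 and changes the number of inversions by at most one; this gives
   both inequalities for Sigma_I.  Along I_m = {-m, ..., m}, Sigma_{I_m}(0) is
   almost surely eventually equal to Sigma(0), hence
   P(Sigma_{I_m}(0) = j) -> P(Sigma(0) = j) and the inequalities pass to the
   limit. *)

Definition inv_count n (s : {perm 'I_n}) : nat :=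
  #|[set kl : 'I_n * 'I_n | (kl.1 < kl.2)%N && (s kl.2 < s kl.1)%N]|.

Lemma tperm_succ_flip n (u v x y : 'I_n) : v = u.+1 :> nat ->
  (x < y)%N -> (tperm u v y < tperm u v x)%N -> x = u /\ y = v.
Proof.
move=> uv xy; do 2 case: tpermP => [?|?|/eqP+ /eqP+]; subst => //; try lia.
all: rewrite -!(inj_eq val_inj) /=; lia.
Qed.

Lemma inv_count_mul_tperm_succ n (s : {perm 'I_n}) (u v : 'I_n) : v = u.+1 :> nat ->
  (inv_count (s * tperm u v) <= (inv_count s).+1)%N.
Proof.
move=> uv; rewrite /inv_count.
set S := [set kl | _ && (s _ < s _)%N].
apply: leq_trans (subset_leq_card (_ : _ \subset (s^-1 u, s^-1 v)%g |: S)) _.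
  apply/fintype.subsetP => -[k l]; rewrite !inE /= !permM => /andP[kl lt_t].
  have [lt_s | le_s] := ltnP (s l) (s k); first by rewrite kl; apply/orP; right.
  have lt_s : (s k < s l)%N.
    by rewrite ltn_neqAle le_s andbT (inj_eq val_inj) (inj_eq perm_inj) neq_ltn kl.
  by have [<- <-] := tperm_succ_flip uv lt_s lt_t; rewrite !permK eqxx.
by rewrite cardsU1 -add1n leq_add2r leq_b1.
Qed.

Definition rank_weight (R : numFieldType) n (q : R) (k0 u : 'I_n) : R :=
  \sum_(s : {perm 'I_n} | s k0 == u) q ^+ inv_count s.

Local Open Scope ring_scope.

Lemma rank_weight_succ (R : numFieldType) n (q : R) (k0 u v : 'I_n) :
  0 < q <= 1 -> v = u.+1 :> nat ->
  q * rank_weight q k0 u <= rank_weight q k0 v /\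
  rank_weight q k0 v <= q^-1 * rank_weight q k0 u.
Proof.
move=> /andP[q_gt0 q_le1] uv; have q_ge0 := ltW q_gt0; set t := tperm u v.
have -> : rank_weight q k0 v =
    \sum_(s : {perm 'I_n} | s k0 == u) q ^+ inv_count (s * t).
  rewrite /rank_weight (reindex_inj (mulIg t)); apply: eq_bigl => s.
  by rewrite permM -[X in _ == X](tpermL u v) (inj_eq perm_inj).
rewrite /rank_weight !mulr_sumr; split; apply: ler_sum => s _.
  by rewrite -exprS ler_wiXn2l //; exact: inv_count_mul_tperm_succ.
rewrite -[leLHS](mulKf (lt0r_neq0 q_gt0)) ler_wpM2l ?invr_ge0 // -exprS.
rewrite ler_wiXn2l // -{1}(mulgK t s) tpermV.
exact: inv_count_mul_tperm_succ.
Qed.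

Local Open Scope classical_set_scope.

Section measurable_events.
Context d (T : measurableType d).

Lemma measurable_rel_int (X Y : T -> int) (r : rel int) :
  (forall u, measurable [set w | X w = u]) ->
  (forall u, measurable [set w | Y w = u]) ->
  measurable [set w | r (X w) (Y w)].
Proof.
move=> mX mY.
have -> : [set w | r (X w) (Y w)] = \bigcup_(uv : int * int)
    (if r uv.1 uv.2 then [set w | X w = uv.1] `&` [set w | Y w = uv.2] else set0).
  apply/seteqP; split => [w rXY | w [[u v] _]] /=.
    by exists (X w, Y w) => //=; rewrite rXY.
  by case: ifP => // ruv [-> ->].
apply: countable_bigcupT_measurable => [|[u v]]; first exact: countableP.
by case: ifP => // _; exact: measurableI.
Qed.

Lemma measurable_finset_pred (F : finType) (b : F -> T -> bool) (Q : pred {set F}) :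
  (forall k, measurable [set w | b k w]) ->
  measurable [set w | Q [set k | b k w]%SET].
Proof.
move=> mb.
have -> : [set w | Q [set k | b k w]%SET] = \bigcup_(B : {set F})
    (if Q B then \bigcap_k [set w | b k w = (k \in B)] else set0).
  apply/seteqP; split => [w Qw | w [B _]] /=.
    by exists [set k | b k w]%SET => //; rewrite Qw => k _ /=; rewrite inE.
  case: ifP => // QB bB; suff -> : [set k | b k w]%SET = B by [].
  by apply/setP => k; rewrite inE bB.
apply: countable_bigcupT_measurable => [|B]; first exact: countableP.
case: ifP => // _; apply: fin_bigcap_measurable => [|k _]; first exact: finite_finset.
case: (k \in B); first exact: mb.
have -> : [set w | b k w = false] = ~` [set w | b k w].
  by apply/seteqP; split => w /=; case: (b k w).
exact: measurableC.
Qed.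

End measurable_events.

Definition rel_rank (s : int -> int) (a : int) (n : nat) (x : int) : nat :=
  #|[set l : 'I_n | (s (a + (l : nat)%:Z) < s x)%R]%SET|.

Lemma card_classic_set (F : finType) (b : pred F) :
  #|[set k : F | b k]| = #|[set k : F | b k]%SET|.
Proof.
apply: eq_card => k; rewrite inE.
by apply/idP/idP => [/set_mem | bk]; last exact: mem_set.
Qed.

Lemma pattern_rel_rank s a n x : pattern s a n x = (a + (rel_rank s a n x)%:Z)%R.
Proof. by rewrite /pattern card_classic_set. Qed.

Section pattern_events.
Context d (T : measurableType d) (Sigma : T -> int -> int).
Hypothesis Sigma_meas : forall i j, measurable [set w | Sigma w i = j].

Lemma measurable_pattern a n x j : measurable [set w | pattern (Sigma w) a n x = j].
Proof.
pose Q (B : {set 'I_n}) := (a + #|B|%:Z == j)%R.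
have -> : [set w | pattern (Sigma w) a n x = j] =
    [set w | Q [set l : 'I_n | (Sigma w (a + (l : nat)%:Z) < Sigma w x)%R]%SET].
  by apply/seteqP; split => w /=; rewrite pattern_rel_rank => /eqP.
apply: measurable_finset_pred => l.
by apply: (measurable_rel_int (fun u v => u < v)%R) => u; exact: Sigma_meas.
Qed.

Lemma measurable_rel_rank a n x u : measurable [set w | rel_rank (Sigma w) a n x = u].
Proof.
have -> : [set w | rel_rank (Sigma w) a n x = u] =
    [set w | pattern (Sigma w) a n x = (a + u%:Z)%R].
  apply/seteqP; split => w /=; rewrite pattern_rel_rank; first by move=> ->.
  by move/addrI => [].
exact: measurable_pattern.
Qed.

End pattern_events.

Section finite_interval.
Context d (T : measurableType d) (R : realType) (P : probability T R).
Variables (q : R) (Sigma : T -> int -> int).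
Hypothesis q_range : (0 < q <= 1)%R.
Hypothesis Sigma_inj : forall w, injective (Sigma w).
Hypothesis Sigma_meas : forall i j, measurable [set w | Sigma w i = j].
Variables (a : int) (n : nat) (c : R).
Hypothesis pattern_law : forall pi, bij_on_interval pi a n.+1 ->
  P [set w | forall x, in_interval a n.+1 x -> pattern (Sigma w) a n.+1 x = pi x] =
  (c * q ^+ inv_on pi a n.+1)%:E.

Local Notation "a +: k" := (a + ((k : 'I_n.+1) : nat)%:Z)%R (at level 50).

Lemma in_intervalP x : in_interval a n.+1 x <-> exists k, x = a +: k.
Proof.
split => [[a_le_x x_lt] | [k ->]]; last by have := ltn_ord k; rewrite /in_interval; lia.
have k_lt : (`|x - a|%N < n.+1)%N by lia.
by exists (Ordinal k_lt) => /=; lia.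
Qed.

Definition interval_perm_fun (s : {perm 'I_n.+1}) (x : int) : int :=
  a +: s (inord `|x - a|%N).

Lemma interval_perm_funE s k : interval_perm_fun s (a +: k) = a +: s k.
Proof. by rewrite /interval_perm_fun addrC addKr absz_nat inord_val. Qed.

Lemma bij_interval_perm_fun s : bij_on_interval (interval_perm_fun s) a n.+1.
Proof.
split=> [x /in_intervalP [k ->] | x y /in_intervalP [k ->] /in_intervalP [l ->]].
  by rewrite interval_perm_funE; apply/in_intervalP; exists (s k).
by rewrite !interval_perm_funE => /addrI [] /val_inj /perm_inj ->.
Qed.

Lemma inv_on_interval_perm_fun s : inv_on (interval_perm_fun s) a n.+1 = inv_count s.
Proof.
rewrite /inv_on card_classic_set; apply: eq_card => kl.
by rewrite !inE !interval_perm_funE ltrD2l ltz_nat.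
Qed.

Definition rank_event (s : {perm 'I_n.+1}) : set T :=
  [set w | forall k, rel_rank (Sigma w) a n.+1 (a +: k) = s k].

Lemma measure_rank_event s : P (rank_event s) = (c * q ^+ inv_count s)%:E.
Proof.
rewrite -inv_on_interval_perm_fun -(pattern_law (bij_interval_perm_fun s)).
congr (P _); apply/seteqP; split => w /= rank_w.
  by move=> x /in_intervalP [k ->]; rewrite pattern_rel_rank interval_perm_funE rank_w.
move=> k; have /rank_w : in_interval a n.+1 (a +: k) by apply/in_intervalP; exists k.
by rewrite pattern_rel_rank interval_perm_funE => /addrI [].
Qed.

Lemma measurable_rank_event s : measurable (rank_event s).
Proof.
have -> : rank_event s = \bigcap_k [set w | rel_rank (Sigma w) a n.+1 (a +: k) = s k].
  by apply/seteqP; split => w /= rank_w k; [move=> _; exact: rank_w | exact: rank_w k I].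
apply: fin_bigcap_measurable => [|k _]; first exact: finite_finset.
exact: measurable_rel_rank.
Qed.

Lemma rel_rank_lt w k : (rel_rank (Sigma w) a n.+1 (a +: k) < n.+1)%N.
Proof.
suff : (rel_rank (Sigma w) a n.+1 (a +: k) < #|[set: 'I_n.+1]%SET|)%N.
  by rewrite cardsT card_ord.
apply: proper_card; apply/properP.
by split; [exact: finset.subsetT | exists k; rewrite !inE ?ltxx].
Qed.

Lemma rel_rank_inj w : injective (fun k => rel_rank (Sigma w) a n.+1 (a +: k)).
Proof.
have rank_mono k l : (Sigma w (a +: k) < Sigma w (a +: l))%R ->
    (rel_rank (Sigma w) a n.+1 (a +: k) < rel_rank (Sigma w) a n.+1 (a +: l))%N.
  move=> lt_kl; apply: proper_card; apply/properP; split.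
    by apply/fintype.subsetP => m; rewrite !inE => /lt_trans; apply.
  by exists k; rewrite !inE ?ltxx.
move=> k l /= eq_kl; case: (ltgtP (Sigma w (a +: k)) (Sigma w (a +: l))).
- by move/rank_mono; rewrite eq_kl ltnn.
- by move/rank_mono; rewrite eq_kl ltnn.
- by move/Sigma_inj/addrI => [] /val_inj.
Qed.

Lemma rank_ord_inj w :
  injective (fun k => inord (rel_rank (Sigma w) a n.+1 (a +: k)) : 'I_n.+1).
Proof.
move=> k l /(congr1 val) /=; rewrite !inordK ?rel_rank_lt //.
exact: rel_rank_inj.
Qed.

Definition rank_perm w : {perm 'I_n.+1} := perm (@rank_ord_inj w).

Lemma rank_event_rank_perm w : rank_event (rank_perm w) w.
Proof. by move=> k; rewrite permE inordK ?rel_rank_lt. Qed.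

Lemma rank_event_uniq s s' w : rank_event s w -> rank_event s' w -> s = s'.
Proof. by move=> rank_s rank_s'; apply/permP => k; apply: ord_inj; rewrite /= -rank_s. Qed.

Lemma rel_rank_event (k0 u : 'I_n.+1) :
  [set w | rel_rank (Sigma w) a n.+1 (a +: k0) = u] =
  \bigcup_(s in [set s : {perm 'I_n.+1} | s k0 == u]) rank_event s.
Proof.
apply/seteqP; split => [w rank_u | w [s /= /eqP s_u]]; last by move=> ->; rewrite s_u.
exists (rank_perm w); last exact: rank_event_rank_perm.
by apply/eqP/ord_inj; rewrite -rank_u rank_event_rank_perm.
Qed.

Lemma measure_rel_rank (k0 u : 'I_n.+1) :
  P [set w | rel_rank (Sigma w) a n.+1 (a +: k0) = u] = (c * rank_weight q k0 u)%:E.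
Proof.
rewrite rel_rank_event measure_fin_bigcup; first last.
- by move=> s _; exact: measurable_rank_event.
- by move=> s s' _ _ [w [rank_s rank_s']]; exact: rank_event_uniq rank_s rank_s'.
- exact: finite_finset.
rewrite -(bigfs _ _ (r := index_enum _) (P := fun s : {perm 'I_n.+1} => s k0 == u)) ?index_enum_uniq //.
  rewrite /rank_weight mulr_sumr -sumEFin; apply: eq_bigr => s _.
  exact: measure_rank_event.
by move=> s _; rewrite mem_index_enum.
Qed.

Lemma mallows_const_ge0 : (0 <= c)%R.
Proof.
have : (0 <= P (rank_event 1))%E by exact: measure_ge0.
rewrite measure_rank_event lee_fin pmulr_lge0 //.
by apply: exprn_gt0; case/andP: q_range.
Qed.

Lemma pattern_eventE (k0 u : 'I_n.+1) :
  [set w | pattern (Sigma w) a n.+1 (a +: k0) = a +: u] =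
  [set w | rel_rank (Sigma w) a n.+1 (a +: k0) = u].
Proof.
apply/seteqP; split => w /=; rewrite pattern_rel_rank; last by move=> ->.
by move/addrI => [].
Qed.

Local Open Scope ereal_scope.

Lemma pattern_law_succ x0 j :
  in_interval a n.+1 x0 -> in_interval a n.+1 j -> in_interval a n.+1 (j + 1)%R ->
  q%:E * P [set w | pattern (Sigma w) a n.+1 x0 = j] <=
    P [set w | pattern (Sigma w) a n.+1 x0 = (j + 1)%R] /\
  P [set w | pattern (Sigma w) a n.+1 x0 = (j + 1)%R] <=
    (q^-1)%:E * P [set w | pattern (Sigma w) a n.+1 x0 = j].
Proof.
move=> /in_intervalP [k0 ->] /in_intervalP [u ->] /in_intervalP [v uv_eq].
have uv : v = u.+1 :> nat by move: uv_eq; rewrite -addrA => /addrI; lia.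
rewrite uv_eq !pattern_eventE !measure_rel_rank -!EFinM !lee_fin.
have [le_uv le_vu] := rank_weight_succ k0 q_range uv.
by split; rewrite mulrCA ler_wpM2l // mallows_const_ge0.
Qed.

End finite_interval.

Section ae_limit.
Context d (T : measurableType d) (R : realType) (P : probability T R).

Lemma fine_measure_le_setU (X Y Z : set T) :
  measurable X -> measurable Y -> measurable Z -> X `<=` Y `|` Z ->
  (fine (P X) <= fine (P Y) + fine (P Z))%R.
Proof.
move=> mX mY mZ XYZ; rewrite -lee_fin EFinD !fineK ?fin_num_measure //.
apply: le_trans (measureU2 P mY mZ).
by apply: le_measure; rewrite ?inE; [exact: mem_set | exact/mem_set/measurableU |].
Qed.

Lemma measure_fineE (X : set T) : measurable X -> P X = (fine (P X))%:E.
Proof. by move=> mX; rewrite fineK ?fin_num_measure. Qed.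

Lemma ae_eventually_cvg_prob (A : nat -> set T) (B : set T) :
  (forall m, measurable (A m)) -> measurable B ->
  {ae P, forall w, exists N, forall m, (N <= m)%N -> (A m w <-> B w)} ->
  fine (P (A m)) @[m --> \oo] --> fine (P B).
Proof.
move=> mA mB ae_AB.
pose K N := \bigcap_(m in [set m | (N <= m)%N]) ((A m `&` B) `|` (~` A m `&` ~` B)).
have mK N : measurable (K N).
  apply: bigcap_measurable => [|m _]; first by exists N => /=.
  apply: measurableU; first exact: measurableI (mA m) mB.
  exact: measurableI (measurableC (mA m)) (measurableC mB).
have K_AB m w : K m w -> (A m w <-> B w).
  by move=> /(_ m (leqnn m)) [[Aw Bw] | [nAw nBw]].
have K_nd : nondecreasing_seq K.
  move=> N N' NN'; apply/subsetPset => w KNw m /= N'm.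
  by apply: KNw; exact: leq_trans N'm.
have mUK := bigcupT_measurable _ mK.
have K_full : P (\bigcup_N K N) = 1%E.
  have [N0 [mN0 PN0 sN0]] := ae_AB.
  apply/eqP; rewrite eq_le probability_le1 //=.
  rewrite -(sube0 1%E) -PN0 -probability_setC //.
  apply: le_measure; [exact/mem_set/measurableC | exact: mem_set |].
  move=> w N0w; have [N HN] : exists N, forall m, (N <= m)%N -> (A m w <-> B w).
    by apply: contrapT => nAB; exact: N0w (sN0 w nAB).
  exists N => // m /= Nm; have [Aw | nAw] := pselect (A m w); [left | right].
    by split => //; apply/(HN m Nm).
  by split => // Bw; apply/nAw/(HN m Nm).
have KC_cvg0 : fine (P (~` K N)) @[N --> \oo] --> (0 : R).
  have K_cvg1 : fine (P (K N)) @[N --> \oo] --> (1 : R).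
    by apply: fine_cvg; rewrite -[1%:E]K_full; exact: nondecreasing_cvg_mu.
  rewrite -(subrr 1%R) (_ : (fun N => _) = (fun N => 1 - fine (P (K N))))%R.
    by apply: cvgB => //; exact: cvg_cst.
  by apply/funext => N; rewrite probability_setC // fineB ?fin_num_measure.
apply: (squeeze_cvgr (f := fun m => fine (P B) - fine (P (~` K m))%R)
                     (h := fun m => fine (P B) + fine (P (~` K m))%R)).
- apply: nearW => m; rewrite lerBlDr; apply/andP; split.
    apply: fine_measure_le_setU => // [|w Bw]; first exact: measurableC.
    by have [Kw | nKw] := pselect (K m w); [left; apply/(K_AB m w Kw) | right].
  apply: fine_measure_le_setU => // [|w Aw]; first exact: measurableC.
  by have [Kw | nKw] := pselect (K m w); [left; apply/(K_AB m w Kw) | right].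
- by rewrite -[X in _ --> X]subr0; apply: cvgB => //; exact: cvg_cst.
- by rewrite -[X in _ --> X]addr0; apply: cvgD => //; exact: cvg_cst.
Qed.

End ae_limit.

Local Open Scope ereal_scope.

Theorem lemma8p1 (d : measure_display) (T : measurableType d) (R : realType)
  (P : probability T R) (q : R) (Sigma : T -> int -> int) :
  (0 < q < 1)%R -> is_mallows_Z P q Sigma ->
  forall j : int,
    (q%:E * P [set w : T | Sigma w 0%R = j] <= P [set w : T | Sigma w 0%R = (j + 1)%R]) /\
    (P [set w : T | Sigma w 0%R = (j + 1)%R] <= (q^-1)%:E * P [set w : T | Sigma w 0%R = j]).
Proof.
move=> /andP[q_gt0 q_lt1] [Sigma_bij Sigma_meas pattern_law pattern_ae] j.
have q_range : (0 < q <= 1)%R by rewrite q_gt0 ltW.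
have Sigma_inj w : injective (Sigma w) := bij_inj (Sigma_bij w).
pose E m i := [set w | pattern (Sigma w) (- m%:Z)%R (2 * m).+1 0%R = i].
pose F i := [set w | Sigma w 0%R = i].
have mE m i : measurable (E m i) by exact: measurable_pattern.
have E_cvg i : fine (P (E m i)) @[m --> \oo] --> fine (P (F i)).
  apply: ae_eventually_cvg_prob => //; first exact: Sigma_meas.
  apply: filterS pattern_ae => w /(_ 0%R) [N HN].
  by exists N => m /HN; rewrite /E /F /= => ->.
have E_succ m : (`|j| < m)%N ->
    (q * fine (P (E m j)) <= fine (P (E m (j + 1))))%R /\
    (fine (P (E m (j + 1))) <= q^-1 * fine (P (E m j)))%R.
  move=> jm; have [c law_m] := pattern_law (- m%:Z)%R (2 * m).+1.
  have [I0 Ij Ij1] : [/\ in_interval (- m%:Z)%R (2 * m).+1 0%R,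
      in_interval (- m%:Z)%R (2 * m).+1 j & in_interval (- m%:Z)%R (2 * m).+1 (j + 1)%R].
    by split; rewrite /in_interval; lia.
  have [le_succ le_pred] :=
    pattern_law_succ q_range Sigma_inj Sigma_meas law_m I0 Ij Ij1.
  move: le_succ le_pred.
  by rewrite (measure_fineE P (mE m j)) (measure_fineE P (mE m (j + 1)%R)) -!EFinM !lee_fin.
rewrite (measure_fineE P (Sigma_meas 0%R j)) (measure_fineE P (Sigma_meas 0%R (j + 1)%R)).
rewrite -!EFinM !lee_fin; split.
  apply: ler_cvg_to (cvgMl_tmp (a := q) (E_cvg j)) (E_cvg (j + 1)%R) _.
  by exists `|j|.+1 => // m /= /E_succ [].
apply: ler_cvg_to (E_cvg (j + 1)%R) (cvgMl_tmp (a := q^-1) (E_cvg j)) _.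
by exists `|j|.+1 => // m /= /E_succ [].
Qed.
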